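(* Let $L=\prod_i L_i$ be a product of fields with an action of a group $G$ by ring automorphisms, such that $G$ acts transitively on the set $\{e_i\}_i$ of principal idempotents of $L$. Let $M$ be a module over the skew group ring $L\rtimes G$ such that the natural map $M\to\prod_i e_i\cdot M$, $m\mapsto(e_i\cdot m)_i$, is an isomorphism and $\dim_{L_i}e_i\cdot M<\infty$ for some $i$. Then $M$ is free of finite rank over $L$.
   Context: The principal idempotents of $L=\prod_iL_i$ are the elements $e_i$ with $1$ in the $i$-th coordinate and $0$ elsewhere; any ring automorphism of $L$ permutes them. *)

From HB Require Import structures.
From mathcomp Require Import all_boot all_order all_algebra.
Set Implicit Arguments. Unset Strict Implicit. Unset Printing Implicit Defensive.
Import GRing.Theory.
Local Open Scope ring_scope.

Record group_laws (G : Type) (mul : G -> G -> G) (one : G) (inv : G -> G) : Prop := {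
  gmulA : forall x y z, mul x (mul y z) = mul (mul x y) z;
  gmul1 : forall x, mul one x = x;
  gmulV : forall x, mul (inv x) x = one }.

Definition is_product_of_fields (L : comPzRingType) (I : Type) (F : I -> fieldType)
  (pi : forall i, {rmorphism L -> F i}) : Prop :=
  bijective (fun x : L => (fun i => pi i x) : forall i, F i).

Definition prin_idem (L : comPzRingType) (I : Type) (F : I -> fieldType)
  (pi : forall i, {rmorphism L -> F i}) (i : I) (e : L) : Prop :=
  pi i e = 1 /\ forall j, j <> i -> pi j e = 0.

Definition ring_aut_action (G : Type) (mul : G -> G -> G) (one : G)
  (L : comPzRingType) (sigma : G -> L -> L) : Prop :=
  [/\ forall g x y, sigma g (x + y) = sigma g x + sigma g y,
      forall g x y, sigma g (x * y) = sigma g x * sigma g y,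
      forall g, sigma g 1 = 1,
      forall x, sigma one x = x &
      forall g h x, sigma (mul g h) x = sigma g (sigma h x)].

(* A module over the skew group ring L # G: an L-module M with an action rho
   of G by additive maps which are sigma-semilinear: g(l m) = sigma_g(l) g(m). *)
Definition skew_module (G : Type) (mul : G -> G -> G) (one : G)
  (L : comPzRingType) (sigma : G -> L -> L) (M : lmodType L) (rho : G -> M -> M) : Prop :=
  [/\ forall g m m', rho g (m + m') = rho g m + rho g m',
      forall g l m, rho g (l *: m) = sigma g l *: rho g m,
      forall m, rho one m = m &
      forall g h m, rho (mul g h) m = rho g (rho h m)].

Definition natural_map_iso (L : comPzRingType) (I : Type) (e : I -> L) (M : lmodType L) : Prop :=
  (forall m m' : M, (forall i, e i *: m = e i *: m') -> m = m') /\
  (forall x : I -> M, (forall i, exists y : M, x i = e i *: y) ->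
     exists m : M, forall i, e i *: m = x i).

(* e_i M is finite dimensional over L_i = F i.  Since L acts on e_i M through
   pi i : L ->> F i, the F i-span of a family in e_i M equals its L-span. *)
Definition fin_dim_component (L : comPzRingType) (I : Type) (e : I -> L) (M : lmodType L)
  (i : I) : Prop :=
  exists n (v : 'I_n -> M), (forall k, exists y : M, v k = e i *: y) /\
    forall x : M, (exists y : M, x = e i *: y) ->
      exists c : 'I_n -> L, x = \sum_(k < n) c k *: v k.

Definition free_fin_rank (L : comPzRingType) (M : lmodType L) : Prop :=
  exists n (b : 'I_n -> M), forall m : M,
    exists! c : 'I_n -> L, m = \sum_(k < n) c k *: b k.

(* A basis of one component e_i M, extracted from a finite spanning family,
   is carried by the semilinear action of any g with sigma_g(e_i) = e_j onto a basis of
   e_j M; by transitivity every component gets a basis with the same number n of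
   vectors.  Since M = prod_j e_j M, gluing the k-th vectors of all these bases gives
   b_k in M, and (b_k)_k is an L-basis of M because L = prod_j F j acts coordinatewise. *)
From mathcomp Require Import all_boot all_order all_algebra.
From Stdlib Require Import Classical ClassicalEpsilon FunctionalExtensionality.
Set Implicit Arguments. Unset Strict Implicit. Unset Printing Implicit Defensive.
Import GRing.Theory.
Local Open Scope ring_scope.

Lemma group_mulgV (G : Type) (mul : G -> G -> G) (one : G) (inv : G -> G) :
  group_laws mul one inv -> forall g, mul g (inv g) = one.
Proof.
move=> [mulA mul1 mulV] g; set y := mul g (inv g).
have yy : mul y y = y by rewrite /y -mulA (mulA (inv g)) mulV mul1.
by rewrite -(mul1 y) -(mulV y) -mulA yy.
Qed.

Lemma additive_zero (U V : zmodType) (f : U -> V) :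
  {morph f : x y / x + y} -> f 0 = 0.
Proof. by move=> fD; apply: (addrI (f 0)); rewrite -fD !addr0. Qed.

Section ProductOfFields.

Variables (L : comPzRingType) (I : Type) (F : I -> fieldType).
Variables (pi : forall i, {rmorphism L -> F i}) (e : I -> L).
Hypothesis L_prod : is_product_of_fields pi.
Hypothesis e_prin : forall i, prin_idem pi i (e i).

Lemma pi_inj (x y : L) : (forall j, pi j x = pi j y) -> x = y.
Proof. by move=> xy; apply: (bij_inj L_prod); exact: functional_extensionality_dep. Qed.

Lemma pi_surj (f : forall j, F j) : exists x, forall j, pi j x = f j.
Proof.
have [g _ gK] := L_prod; exists (g f) => j.
by have := gK f => /(f_equal (fun h => h j)).
Qed.

Lemma pi_idemM i a : pi i (e i * a) = pi i a.
Proof. by rewrite rmorphM (e_prin i).1 mul1r. Qed.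

Lemma idemM_eq i a b : pi i a = pi i b -> e i * a = e i * b.
Proof.
move=> ab; apply: pi_inj => j; rewrite !rmorphM.
case: (classic (j = i)) => [->|ji]; first by rewrite ab.
by rewrite (e_prin i).2 // !mul0r.
Qed.

Lemma idemM_eq0 i a : e i * a = 0 <-> pi i a = 0.
Proof.
split=> [a0|]; first by rewrite -pi_idemM a0 rmorph0.
by rewrite -(rmorph0 (pi i)) => /idemM_eq ->; rewrite mulr0.
Qed.

Lemma idem_sqr i : e i * e i = e i.
Proof. by rewrite -[RHS]mulr1; apply: idemM_eq; rewrite (e_prin i).1 rmorph1. Qed.

Lemma idem_invertible i a : pi i a <> 0 -> exists u, e i * (u * a) = e i.
Proof.
move=> a_neq0; have [u uE] := pi_surj (fun j => (pi j a)^-1).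
exists u; rewrite -[RHS]mulr1; apply: idemM_eq.
by rewrite rmorphM uE rmorph1 mulVf //; apply/eqP.
Qed.

Variable M : lmodType L.

Definition in_component (c : L) (x : M) : Prop := exists y : M, x = c *: y.

(* [fin_dim_component e M i] unfolds to [exists n v, spans_component (e i) v]. *)
Definition spans_component (c : L) n (v : 'I_n -> M) : Prop :=
  (forall k, in_component c (v k)) /\
  forall x, in_component c x -> exists a : 'I_n -> L, x = \sum_(k < n) a k *: v k.

(* Linear independence over F i: L acts on e_i M through pi i. *)
Definition pi_free (i : I) n (v : 'I_n -> M) : Prop :=
  forall a : 'I_n -> L, \sum_(k < n) a k *: v k = 0 -> forall k, pi i (a k) = 0.

Lemma in_component_idem i x : in_component (e i) x -> e i *: x = x.
Proof. by move=> [y ->]; rewrite scalerA idem_sqr. Qed.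

Lemma spans_component_drop i n (v : 'I_n.+1 -> M) (a : 'I_n.+1 -> L) k0 :
  spans_component (e i) v -> \sum_(k < n.+1) a k *: v k = 0 -> pi i (a k0) <> 0 ->
  spans_component (e i) (fun k => v (lift k0 k)).
Proof.
move=> [v_in v_span] a0 ak0; split=> [k|x]; first exact: v_in.
move=> /v_span[c ->].
have [u uE] := idem_invertible ak0.
have vk0E : v k0 = - \sum_(k < n) (e i * u * a (lift k0 k)) *: v (lift k0 k).
  rewrite (bigD1_ord k0) //= in a0.
  have ak0E : a k0 *: v k0 = - \sum_(k < n) a (lift k0 k) *: v (lift k0 k).
    by apply/eqP; rewrite -addr_eq0 a0.
  rewrite -(in_component_idem (v_in k0)) -{1}uE mulrA -scalerA ak0E scalerN scaler_sumr.
  by congr (- _); apply: eq_bigr => k _; rewrite scalerA.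
exists (fun k => c (lift k0 k) - c k0 * (e i * u * a (lift k0 k))).
rewrite (bigD1_ord k0) //= vk0E scalerN scaler_sumr.
under [in RHS]eq_bigr => k _ do rewrite scalerBl.
rewrite sumrB addrC; congr (_ + - _).
by apply: eq_bigr => k _; rewrite scalerA.
Qed.

Lemma component_basis i n (v : 'I_n -> M) : spans_component (e i) v ->
  exists n' (w : 'I_n' -> M), spans_component (e i) w /\ pi_free i w.
Proof.
elim: n v => [|n IH] v v_span.
  by exists 0%N, v; split=> // a _ [].
have [v_free|v_dep] := classic (pi_free i v); first by exists n.+1, v; split.
have [a a0 [k0 ak0]] :
    exists2 a, \sum_(k < n.+1) a k *: v k = 0 & exists k, pi i (a k) <> 0.
  apply: NNPP => no_dep; apply: v_dep => a a0 k; apply: NNPP => ak0.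
  by apply: no_dep; exists a => //; exists k.
exact: IH (spans_component_drop v_span a0 ak0).
Qed.

Lemma free_fin_rank_of_component_bases n (w : I -> 'I_n -> M) :
  natural_map_iso e M ->
  (forall j, spans_component (e j) (w j)) -> (forall j, pi_free j (w j)) ->
  free_fin_rank M.
Proof.
move=> [e_inj e_surj] w_span w_free.
have [b bE] : exists b : 'I_n -> M, forall k j, e j *: b k = w j k.
  apply: (choice (fun k b => forall j, e j *: b = w j k)) => k.
  by apply: e_surj => j; exact: (w_span j).1.
have idem_sum j (c : 'I_n -> L) :
    e j *: \sum_(k < n) c k *: b k = \sum_(k < n) c k *: w j k.
  rewrite scaler_sumr; apply: eq_bigr => k _.
  by rewrite scalerA mulrC -scalerA bE.
exists n, b => m.
have [cj cjE] : exists cj : I -> 'I_n -> L,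
    forall j, e j *: m = \sum_(k < n) cj j k *: w j k.
  by apply: (choice (fun j c => e j *: m = \sum_(k < n) c k *: w j k)) => j;
  apply: (w_span j).2; exists m.
have [c cE] : exists c : 'I_n -> L, forall k j, pi j (c k) = pi j (cj j k).
  apply: (choice (fun k x => forall j, pi j x = pi j (cj j k))) => k.
  exact: pi_surj.
have m_sum : m = \sum_(k < n) c k *: b k.
  apply: e_inj => j; rewrite cjE idem_sum; apply: eq_bigr => k _.
  have [y ->] := (w_span j).1 k.
  by rewrite !scalerA ![_ * e j]mulrC (idemM_eq (cE k j)).
exists c; split=> // c' mE.
apply: functional_extensionality => k; apply: pi_inj => j; apply/eqP.
rewrite -subr_eq0 -rmorphB; apply/eqP; apply: (w_free j (fun k => c k - c' k)).
under eq_bigr => k' _ do rewrite scalerBl.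
by rewrite sumrB -!idem_sum -m_sum -mE subrr.
Qed.

Section SkewAction.

Variables (G : Type) (mul : G -> G -> G) (one : G) (inv : G -> G).
Variables (sigma : G -> L -> L) (rho : G -> M -> M).
Hypothesis G_group : group_laws mul one inv.
Hypothesis sigma_act : ring_aut_action mul one sigma.
Hypothesis rho_act : skew_module mul one sigma rho.

Lemma sigmaK g x : sigma (inv g) (sigma g x) = x.
Proof. by have [_ _ _ s1 sM] := sigma_act; rewrite -sM (gmulV G_group) s1. Qed.

Lemma sigmaKV g x : sigma g (sigma (inv g) x) = x.
Proof. by have [_ _ _ s1 sM] := sigma_act; rewrite -sM (group_mulgV G_group) s1. Qed.

Lemma rhoK g x : rho (inv g) (rho g x) = x.
Proof. by have [_ _ r1 rM] := rho_act; rewrite -rM (gmulV G_group) r1. Qed.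

Lemma rhoKV g x : rho g (rho (inv g) x) = x.
Proof. by have [_ _ r1 rM] := rho_act; rewrite -rM (group_mulgV G_group) r1. Qed.

Lemma rho_sum g n (c : 'I_n -> L) (v : 'I_n -> M) :
  rho g (\sum_(k < n) c k *: v k) = \sum_(k < n) sigma g (c k) *: rho g (v k).
Proof.
have [rD rZ _ _] := rho_act.
rewrite (big_morph (rho g) (rD g) (additive_zero (rD g))).
by apply: eq_bigr => k _; rewrite rZ.
Qed.

Lemma spans_component_transport g c c' n (v : 'I_n -> M) :
  sigma g c = c' -> spans_component c v -> spans_component c' (fun k => rho g (v k)).
Proof.
have [_ rZ _ _] := rho_act.
move=> gc [v_in v_span]; split=> [k|x [y ->]].
  by have [y ->] := v_in k; exists (rho g y); rewrite rZ gc.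
have y_in : in_component c (rho (inv g) (c' *: y)).
  by exists (rho (inv g) y); rewrite rZ -gc sigmaK.
have [a aE] := v_span _ y_in.
by exists (fun k => sigma g (a k)); rewrite -rho_sum -aE rhoKV.
Qed.

Lemma pi_free_transport g i j n (v : 'I_n -> M) :
  sigma g (e i) = e j -> pi_free i v -> pi_free j (fun k => rho g (v k)).
Proof.
have [sD sM _ _ _] := sigma_act; have [rD _ _ _] := rho_act.
move=> gij v_free a a0 k.
have a0' : \sum_(k < n) sigma (inv g) (a k) *: v k = 0.
  under eq_bigr => k' _ do rewrite -(rhoK g (v k')).
  by rewrite -rho_sum a0 (additive_zero (rD _)).
move/idemM_eq0: (v_free _ a0' k) => /(f_equal (sigma g)).
by rewrite sM gij sigmaKV (additive_zero (sD g)) idemM_eq0.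
Qed.

End SkewAction.

End ProductOfFields.

Theorem lemma2p4 (L : comPzRingType) (I : Type) (F : I -> fieldType)
  (pi : forall i, {rmorphism L -> F i})
  (G : Type) (mul : G -> G -> G) (one : G) (inv : G -> G)
  (sigma : G -> L -> L) (e : I -> L) (M : lmodType L) (rho : G -> M -> M) :
  group_laws mul one inv ->
  is_product_of_fields pi ->
  (forall i, prin_idem pi i (e i)) ->
  ring_aut_action mul one sigma ->
  (forall i j, exists g, sigma g (e i) = e j) ->
  skew_module mul one sigma rho ->
  natural_map_iso e M ->
  (exists i, fin_dim_component e M i) ->
  free_fin_rank M.
Proof.
move=> G_group L_prod e_prin sigma_act e_trans rho_act e_iso [i [n0 [v0 v0_span]]].
have [n [v [v_span v_free]]] := component_basis L_prod e_prin v0_span.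
have [g gE] := choice _ (e_trans i).
apply: (free_fin_rank_of_component_bases L_prod e_prin
  (w := fun j k => rho (g j) (v k)) e_iso) => j.
- exact: (spans_component_transport G_group sigma_act rho_act (gE j) v_span).
- exact: (pi_free_transport L_prod e_prin G_group sigma_act rho_act (gE j) v_free).
Qed.
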